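(* Consider the asynchronous market process described in the context, and assume the demand functions satisfy: (fixed spending) $\sum_ip_ix_i(p)=M$ for all $p$ (constant $M>0$); (WGS) for $j\ne i$, $x_j(p)$ is non-decreasing in $p_i$; (elasticity $E$) each $x_i$ is differentiable in $p_i$ with $\frac{x_i(p)}{p_i}\le-\frac{\partial x_i}{\partial p_i}(p)\le E\frac{x_i(p)}{p_i}$ for all $p$, where $E\ge 1$. Suppose $x_i(t)\le d\,w_i$ for all $i$ and all $t$, where $d\ge2$, and that $\alpha_1(d-1)\le1$ and $\lambda\alpha_1+\lambda\big(1+\frac{2Ed}{1-\lambda E}\big)\le1$ (with $\lambda E<1$). Then for all $t\ge0$, $\phi(t+1)\le\big(1-\frac{\lambda\alpha_1}{2}\big)\phi(t)$. Hence $\phi$ decreases from $\phi_I$ to at most $\phi_F$ within $O\big(\frac{1}{\lambda\alpha_1}\log\frac{\phi_I}{\phi_F}\big)$ days.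
   Context: Asynchronous market process: $n$ goods with daily supply rates $w_i>0$ and demand functions $x_i:(0,\infty)^n\to(0,\infty)$ (demands are instantaneous daily rates). Time $t\ge0$ is continuous (unit: one day). The price vector $p(t)$ is piecewise constant and right-continuous with finitely many changes in any bounded interval; write $x_i(t)=x_i(p(t))$. Each price $p_i$ changes only at its own update times; time $0$ is an update time for every good and consecutive update times of the same good are at most $1$ apart. $\tau_i(t)$ denotes the last update time of $p_i$ that is $\le t$, and $\bar x_i(t)=\frac1{t-\tau_i(t)}\int_{\tau_i(t)}^t x_i(s)\,ds$ if $t>\tau_i(t)$ (with $\bar x_i(t)=x_i(t)$ if $t=\tau_i(t)$). At an update time $t$ of good $i$, $p_i(t)=p_i(t^-)\big(1+\lambda\min\{1,\frac{\bar x_i(t^-)-w_i}{w_i}\}\big)$, where $\bar x_i(t^-)$ is the average demand over $[\tau_i(t^-),t]$; $\lambda>0$ is a fixed parameter. For reals $a,b,c$, $\mathrm{span}(a,b,c)=\max\{a,b,c\}-\min\{a,b,c\}$. The potential is $\phi=\sum_i\phi_i$ with $\phi_i(t)=p_i(t)\big[\mathrm{span}(x_i(t),\bar x_i(t),w_i)-\alpha_1\lambda|w_i-\bar x_i(t)|\,(t-\tau_i(t))\big]$, where $\alpha_1>0$ is a constant. *)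

From Stdlib Require Import Reals Lra ClassicalEpsilon.
Open Scope R_scope.

Fixpoint rsum (n : nat) (f : nat -> R) : R :=
  match n with O => 0 | S m => rsum m f + f m end.

(* price vectors: nat -> R, only coordinates < n are meaningful *)
Definition pos_vec (n : nat) (p : nat -> R) : Prop :=
  forall i, (i < n)%nat -> 0 < p i.

Definition upd (p : nat -> R) (i : nat) (s : R) : nat -> R :=
  fun j => if Nat.eq_dec j i then s else p j.

Definition span3 (a b c : R) : R := Rmax a (Rmax b c) - Rmin a (Rmin b c).

(* Riemann integral of f over [a,b] (well defined whenever f is
   Riemann integrable on [a,b], by proof irrelevance of RiemannInt). *)
Definition integral (f : R -> R) (a b : R) : R :=
  epsilon (inhabits 0)
    (fun I => exists pr : Riemann_integrable f a b, RiemannInt pr = I).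

(* u k = k-th update time of a good (u 0 = 0).  tau u t = last update time
   that is <= t. *)
Definition tau (u : nat -> R) (t : R) : R :=
  epsilon (inhabits 0) (fun s => exists k, u k = s /\ u k <= t /\ t < u (S k)).

Definition xbar (x : nat -> (nat -> R) -> R) (u : nat -> nat -> R)
    (p : R -> nat -> R) (i : nat) (t : R) : R :=
  let ti := tau (u i) t in
  if Req_EM_T t ti then x i (p t)
  else / (t - ti) * integral (fun s => x i (p s)) ti t.

Definition phi_i (x : nat -> (nat -> R) -> R) (w : nat -> R) (lam alpha1 : R)
    (u : nat -> nat -> R) (p : R -> nat -> R) (i : nat) (t : R) : R :=
  p t i * (span3 (x i (p t)) (xbar x u p i t) (w i)
           - alpha1 * lam * Rabs (w i - xbar x u p i t) * (t - tau (u i) t)).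

Definition phi (n : nat) (x : nat -> (nat -> R) -> R) (w : nat -> R)
    (lam alpha1 : R) (u : nat -> nat -> R) (p : R -> nat -> R) (t : R) : R :=
  rsum n (fun i => phi_i x w lam alpha1 u p i t).

From Stdlib Require Import Reals Lra Psatz Lia Bool FunctionalExtensionality ClassicalEpsilon
  RList RiemannInt_SF RiemannInt.
Open Scope R_scope.

(* Between two price updates each term [p_i (span - α₁λ |w_i - x̄_i| (t - τ_i))] of the
   potential shrinks at rate at least α₁λ, because the running average x̄_i drifts towards the
   current demand.  At an update of good i the price is multiplied by [1 + r]; the elasticity
   bounds control the new demand of good i, while fixed spending and WGS bound the total change
   of all other terms by the change of spending on good i, so the potential does not increase.
   Simultaneous updates are performed one at a time, price cuts first.  Chaining over the
   events of one day gives the factor [1/(1 + α₁λ) <= 1 - α₁λ/2]; iterating gives the time bound. *)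

(** * Elementary inequalities *)

Ltac resolve_max_min_abs := repeat match goal with
  | |- context [Rmax ?a ?b] => first [rewrite (Rmax_left a b) by lra | rewrite (Rmax_right a b) by lra]
  | |- context [Rmin ?a ?b] => first [rewrite (Rmin_left a b) by lra | rewrite (Rmin_right a b) by lra]
  | |- context [Rabs ?a] => first [rewrite (Rabs_right a) by lra | rewrite (Rabs_left a) by lra]
  end.

Ltac span3_cases := unfold span3; repeat match goal with
  | |- context [Rmax ?a ?b] => lazymatch b with context [Rmax _ _] => fail | _ =>
      destruct (Rle_dec a b); [rewrite (Rmax_right a b) by lra | rewrite (Rmax_left a b) by lra] end
  | |- context [Rmin ?a ?b] => lazymatch b with context [Rmin _ _] => fail | _ =>
      destruct (Rle_dec a b); [rewrite (Rmin_left a b) by lra | rewrite (Rmin_right a b) by lra] end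
  | |- context [Rabs ?a] => destruct (Rle_dec 0 a); [rewrite (Rabs_right a) by lra | rewrite (Rabs_left a) by lra]
  end; lra.

Lemma span3_ge_dist12 a b c : Rabs (a - b) <= span3 a b c.
Proof. span3_cases. Qed.

Lemma span3_ge_dist13 a b c : Rabs (a - c) <= span3 a b c.
Proof. span3_cases. Qed.

Lemma span3_ge_dist32 a b c : Rabs (c - b) <= span3 a b c.
Proof. span3_cases. Qed.

Lemma span3_diag a c : span3 a a c = Rabs (a - c).
Proof. span3_cases. Qed.

Lemma span3_lipschitz1 a a' b c : span3 a b c - span3 a' b c <= Rabs (a - a').
Proof. span3_cases. Qed.

(* [X'] is the running average [Xb] over [dl] days, continued for [D] more days at demand [x]. *)
Lemma term_flow_decay c x Xb w dl D : 0 <= c <= 1/3 -> 0 <= dl -> 0 < D -> dl + D <= 1 ->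
  let X' := (dl * Xb + x * D) / (dl + D) in
  (1 + c * D) * (span3 x X' w - c * Rabs (w - X') * (dl + D))
    <= span3 x Xb w - c * Rabs (w - Xb) * dl.
Proof.
  intros Hc Hdl HD HS X'.
  assert (HX : X' * (dl + D) = dl * Xb + x * D) by (unfold X'; field; lra).
  assert (HXa : Rabs (w - X') * (dl + D) = Rabs (w * (dl + D) - (dl * Xb + x * D))).
  { rewrite <- HX, <- Rmult_minus_distr_r, Rabs_mult, (Rabs_right (dl + D)) by lra. reflexivity. }
  rewrite Rmult_assoc, HXa.
  clearbody X'.
  assert (HX1 : (X' - x) * (dl + D) = dl * (Xb - x)) by nra.
  assert (HX2 : (X' - Xb) * (dl + D) = D * (x - Xb)) by nra.
  assert (HB1 : x <= Xb -> x <= X' <= Xb) by (intros; split; nra).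
  assert (HB2 : Xb <= x -> Xb <= X' <= x) by (intros; split; nra).
  assert (0 <= c * D <= 1/3) by nra. assert (0 <= c * dl <= 1/3) by nra.
  assert (c * (dl + D) <= 1/3) by nra.
  assert (0 <= c * c * D * D) by nra. assert (0 <= c * c * D * dl) by nra.
  assert (0 <= c * c * D) by nra.
  assert (c * dl * (2 + c * D) <= 7/9) by nra.
  assert (c * (dl + D) * (2 + c * D) <= 7/9) by nra.
  assert (c * D * (2 + c * D) <= 7/9) by nra.
  unfold span3.
  destruct (Rle_dec x w); destruct (Rle_dec Xb w); destruct (Rle_dec x Xb);
  destruct (Rle_dec X' w); destruct (Rle_dec x X'); destruct (Rle_dec X' Xb);
  destruct (Rle_dec 0 (w * (dl + D) - (dl * Xb + x * D)));
  resolve_max_min_abs; nra.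
Qed.

Definition price_rate (lam Xb w : R) : R := lam * Rmin 1 ((Xb - w) / w).

Lemma price_rate_bounds lam Xb w : 0 <= lam -> 0 < w -> 0 <= Xb -> - lam <= price_rate lam Xb w <= lam.
Proof.
  intros Hlam Hw HX. unfold price_rate.
  assert (-1 <= (Xb - w) / w) by (apply (Rmult_le_reg_r w); [|unfold Rdiv; rewrite Rmult_assoc, Rinv_l]; lra).
  destruct (Rle_dec 1 ((Xb - w) / w)).
  - rewrite Rmin_left by lra. lra.
  - rewrite Rmin_right by lra. split; nra.
Qed.

Lemma price_rate_cut lam Xb w : 0 < w -> Xb < w ->
  price_rate lam Xb w * w = - (lam * (w - Xb)).
Proof.
  intros Hw HX. unfold price_rate. rewrite Rmin_right.
  - field. lra.
  - assert ((Xb - w) / w < 0) by (apply Rdiv_neg_pos; lra). lra.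
Qed.

Lemma price_rate_raise lam c d Xb w : 0 <= c -> c <= lam -> c * (d - 1) <= lam -> 0 < w -> w <= Xb <= d * w ->
  c * (Xb - w) <= price_rate lam Xb w * w <= lam * (Xb - w).
Proof.
  intros Hc Hcl Hcd Hw HX. unfold price_rate.
  assert (Hq : (Xb - w) / w * w = Xb - w) by (field; lra).
  destruct (Rle_dec ((Xb - w) / w) 1).
  - rewrite Rmin_right by lra. rewrite Rmult_assoc, Hq. nra.
  - rewrite Rmin_left by lra.
    assert (w < Xb - w) by (rewrite <- Hq; apply Rnot_le_lt in n; nra).
    assert (c * (Xb - w) <= c * ((d - 1) * w)) by (apply Rmult_le_compat_l; lra).
    nra.
Qed.

Section UpdateBound.
Variables (E d lam c : R).
Hypothesis HE : 1 <= E.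
Hypothesis Hd : 2 <= d.
Hypothesis Hlam : 0 < lam.
Hypothesis HlamE : lam * E < 1.
Hypothesis Hc0 : 0 <= c.
Hypothesis Hc_lam : c <= lam.
Hypothesis Hc_d : c * (d - 1) <= lam.
Hypothesis Hcond : c + lam * (1 + 2 * E * d / (1 - lam * E)) <= 1.

Let q := 1 - lam * E.
Let G := 2 * E * d / q.

Lemma q_pos : 0 < q.
Proof. unfold q; lra. Qed.

Lemma lam_lt_1 : lam < 1.
Proof. nra. Qed.

Lemma G_mul_q : G * q = 2 * E * d.
Proof. unfold G. field. apply Rgt_not_eq, q_pos. Qed.

Lemma update_bound_raise w Xb dl xt xh r :
  0 < w -> w <= Xb -> 0 <= dl <= 1 -> 0 <= xt -> 0 <= xh ->
  0 <= r <= lam -> c * (Xb - w) <= r * w <= lam * (Xb - w) ->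
  (1 + r) * xh <= xt -> xt * (1 - E * r) <= xh ->
  (1 + r) * Rabs (xh - w) + Rabs ((1 + r) * xh - xt) <= span3 xt Xb w - c * Rabs (w - Xb) * dl.
Proof.
  intros Hw HXw Hdl Hxt Hxh Hr Hrw H1 H2.
  pose proof q_pos as Hq. set (D := Xb - w) in *.
  assert (HD : 0 <= D) by (unfold D; lra).
  assert (HcD : c * D * dl <= c * D) by (assert (0 <= c * D) by nra; nra).
  assert (HErr : 0 < 1 - E * r) by nra.
  rewrite (Rabs_left1 (w - Xb)) by lra.
  rewrite (Rabs_left1 ((1 + r) * xh - xt)) by lra.
  destruct (Rle_dec w xh) as [Hxw|Hxw].
  - rewrite (Rabs_right (xh - w)) by lra.
    assert (w <= xt) by nra.
    pose proof (span3_ge_dist13 xt Xb w) as Hs. rewrite Rabs_right in Hs by lra.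
    unfold D in *. lra.
  - rewrite (Rabs_left1 (xh - w)) by lra.
    assert (Hxtq : xt * q <= w).
    { unfold q. assert (xt * (1 - lam * E) <= xt * (1 - E * r)) by (apply Rmult_le_compat_l; nra). lra. }
    assert (HK : 2 * xt * r * (E - 1 + E * r) <= G * (lam * D)).
    { assert (H3 : 2 * xt * r * (E - 1 + E * r) * q <= 2 * (E - 1 + E * lam) * (lam * D)).
      { assert (0 <= E - 1 + E * r <= E - 1 + E * lam) by nra.
        assert (0 <= 2 * r * (E - 1 + E * r)) by nra.
        apply Rle_trans with (2 * (E - 1 + E * r) * (r * w)).
        - replace (2 * xt * r * (E - 1 + E * r) * q) with ((2 * r * (E - 1 + E * r)) * (xt * q)) by ring.
          replace (2 * (E - 1 + E * r) * (r * w)) with ((2 * r * (E - 1 + E * r)) * w) by ring.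
          apply Rmult_le_compat_l; lra.
        - apply Rmult_le_compat; nra. }
      assert (0 <= lam * D) by (unfold D; nra).
      apply (Rmult_le_reg_r q); [lra|].
      replace (G * (lam * D) * q) with (G * q * (lam * D)) by ring.
      rewrite G_mul_q. eapply Rle_trans; [exact H3|].
      apply Rmult_le_compat_r; [lra|]. nra. }
    assert (HB : lam * D + G * (lam * D) + c * D <= D) by (fold q G in Hcond; unfold D; nra).
    destruct (Rle_dec xt w).
    + pose proof (span3_ge_dist12 xt Xb w) as Hs. rewrite Rabs_left1 in Hs by lra.
      unfold D in *. nra.
    + pose proof (span3_ge_dist32 xt Xb w) as Hs. rewrite Rabs_left1 in Hs by lra.
      unfold D in *. nra.
Qed.

Lemma update_bound_cut_overshoot w Xb dl xt xh r :
  0 < w -> Xb < w -> 0 <= dl <= 1 -> 0 <= xt <= d * w -> w < xh ->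
  - lam <= r < 0 -> r * w = - (lam * (w - Xb)) ->
  xt <= (1 + r) * xh -> xh * (1 + E * r) <= xt ->
  (1 + r) * (xh - w) + ((1 + r) * xh - xt) <= span3 xt Xb w - c * (w - Xb) * dl.
Proof.
  intros Hw HXw Hdl Hxt Hxw Hr Hrw H1 H2.
  pose proof q_pos as Hq. pose proof lam_lt_1. set (D := w - Xb) in *.
  assert (HD : 0 < D) by (unfold D; lra).
  assert (HcD : c * D * dl <= c * D) by (assert (0 <= c * D) by nra; nra).
  set (s := 1 + E * r).
  assert (Hs0 : q <= s <= 1) by (unfold s, q; nra).
  assert (Hx1 : (1 + r) * xh * s <= xt * s + xt * (E - 1) * (- r)).
  { replace (xt * s + xt * (E - 1) * (- r)) with ((1 + r) * xt) by (unfold s; ring).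
    rewrite Rmult_assoc. apply Rmult_le_compat_l; unfold s; lra. }
  assert (HK0 : 0 <= xt * (E - 1) * (- r)) by (apply Rmult_le_pos; nra).
  assert (HK : (1 + r) * xh * q <= xt * q + xt * (E - 1) * (- r)).
  { apply (Rmult_le_reg_r s); [lra|].
    assert (q * ((1 + r) * xh * s) <= q * (xt * s + xt * (E - 1) * (- r))) by (apply Rmult_le_compat_l; lra).
    assert (xt * (E - 1) * (- r) * q <= xt * (E - 1) * (- r) * s) by (apply Rmult_le_compat_l; lra).
    nra. }
  assert (Hxr : xt * (- r) <= d * (lam * D)).
  { apply (Rmult_le_reg_r w); [lra|].
    replace (xt * - r * w) with (- (xt * (r * w))) by ring. rewrite Hrw.
    replace (- (xt * - (lam * D))) with (xt * (lam * D)) by ring.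
    replace (d * (lam * D) * w) with (d * w * (lam * D)) by ring.
    apply Rmult_le_compat_r; nra. }
  assert (HK2 : 2 * (1 + r) * xh - xt <= xt + G * (lam * D)).
  { apply (Rmult_le_reg_r q); [lra|].
    replace ((xt + G * (lam * D)) * q) with (xt * q + G * q * (lam * D)) by ring.
    rewrite G_mul_q.
    assert (xt * (E - 1) * (- r) <= (E - 1) * (d * (lam * D))).
    { replace (xt * (E - 1) * (- r)) with ((E - 1) * (xt * (- r))) by ring.
      apply Rmult_le_compat_l; lra. }
    assert (0 <= lam * D) by nra. nra. }
  assert (HB : lam * D + G * (lam * D) + c * D <= D) by (fold q G in Hcond; nra).
  pose proof (span3_ge_dist12 xt Xb w) as Hs. pose proof (span3_ge_dist32 xt Xb w) as Hs2.
  rewrite Rabs_right in Hs2 by lra.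
  unfold D in *. destruct (Rle_dec Xb xt).
  - rewrite Rabs_right in Hs by lra. nra.
  - rewrite Rabs_left1 in Hs by lra. nra.
Qed.

Lemma update_bound_cut w Xb dl xt xh r :
  0 < w -> Xb < w -> 0 <= dl <= 1 -> 0 <= xt <= d * w -> 0 <= xh ->
  - lam <= r < 0 -> r * w = - (lam * (w - Xb)) ->
  xt <= (1 + r) * xh -> xh * (1 + E * r) <= xt ->
  (1 + r) * Rabs (xh - w) + Rabs ((1 + r) * xh - xt) <= span3 xt Xb w - c * Rabs (w - Xb) * dl.
Proof.
  intros Hw HXw Hdl Hxt Hxh Hr Hrw H1 H2.
  rewrite (Rabs_right (w - Xb)), (Rabs_right ((1 + r) * xh - xt)) by lra.
  destruct (Rle_dec xh w) as [Hxw|Hxw].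
  - rewrite (Rabs_left1 (xh - w)) by lra.
    pose proof (span3_ge_dist32 xt Xb w) as Hs. pose proof (span3_ge_dist13 xt Xb w) as Hs2.
    assert (c * (w - Xb) <= lam * (w - Xb)) by (apply Rmult_le_compat_r; lra).
    assert (c * (w - Xb) * dl <= c * (w - Xb)) by (assert (0 <= c * (w - Xb)) by nra; nra).
    destruct (Rle_dec w xt).
    + rewrite Rabs_right in Hs2 by lra. rewrite Rabs_right in Hs by lra. lra.
    + rewrite Rabs_left1 in Hs2 by lra. rewrite Rabs_right in Hs by lra. lra.
  - rewrite (Rabs_right (xh - w)) by lra. apply update_bound_cut_overshoot; auto; lra.
Qed.

(* The left side is the new term of the updated good (its price scaled by [1 + r], its average
   reset) plus the bound, coming from fixed spending, on the change of all the other terms. *)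
Lemma update_bound w Xb dl xt xh :
  0 < w -> 0 <= Xb <= d * w -> 0 <= dl <= 1 -> 0 <= xt -> 0 <= xh ->
  let r := price_rate lam Xb w in
  (0 <= r -> (1 + r) * xh <= xt /\ xt * (1 - E * r) <= xh) ->
  (r < 0 -> xt <= (1 + r) * xh /\ xh * (1 + E * r) <= xt /\ xt <= d * w) ->
  (1 + r) * Rabs (xh - w) + Rabs ((1 + r) * xh - xt) <= span3 xt Xb w - c * Rabs (w - Xb) * dl.
Proof.
  intros Hw HXb Hdl Hxt Hxh r Hraise Hcut.
  pose proof (price_rate_bounds lam Xb w ltac:(lra) Hw (proj1 HXb)) as Hr. fold r in Hr.
  destruct (Rle_dec w Xb) as [HXw|HXw].
  - pose proof (price_rate_raise lam c d Xb w Hc0 Hc_lam Hc_d Hw ltac:(lra)) as Hrw. fold r in Hrw.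
    assert (0 <= r) by (assert (0 <= c * (Xb - w)) by nra; nra).
    destruct (Hraise ltac:(lra)).
    apply update_bound_raise; auto; lra.
  - pose proof (price_rate_cut lam Xb w Hw ltac:(lra)) as Hrw. fold r in Hrw.
    assert (r < 0) by nra.
    destruct (Hcut ltac:(lra)) as (? & ? & ?).
    apply update_bound_cut; auto; lra.
Qed.
End UpdateBound.

(** * Elastic demand *)

Section Elasticity.
Variables (g : R -> R) (E a b : R).
Hypothesis HE : 0 <= E.
Hypothesis Ha : 0 < a.
Hypothesis Hab : a <= b.
Hypothesis Hg : forall s, a <= s <= b -> 0 < g s.
Hypothesis Hg_elastic : forall s, a <= s <= b ->
  exists l, derivable_pt_lim g s l /\ g s / s <= - l /\ - l <= E * (g s / s).

Let dg (s : R) : R := epsilon (inhabits 0)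
  (fun l => derivable_pt_lim g s l /\ g s / s <= - l /\ - l <= E * (g s / s)).

Lemma dg_spec s : a <= s <= b ->
  derivable_pt_lim g s (dg s) /\ g s / s <= - dg s /\ - dg s <= E * (g s / s).
Proof. intro H. apply epsilon_spec, Hg_elastic, H. Qed.

Lemma revenue_antitone s1 s2 : a <= s1 -> s1 <= s2 -> s2 <= b -> s2 * g s2 <= s1 * g s1.
Proof.
  intros H1 H2 H3. destruct (Rle_lt_or_eq_dec _ _ H2) as [Hlt|Heq]; [|subst; lra].
  destruct (MVT_cor2 (fun s => s * g s) (fun s => 1 * g s + s * dg s) s1 s2 Hlt) as [c [Hc1 Hc2]].
  - intros c Hc. destruct (dg_spec c ltac:(lra)) as [Hd1 _].
    apply (derivable_pt_lim_mult id g c 1 (dg c)); [apply derivable_pt_lim_id | exact Hd1].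
  - destruct (dg_spec c ltac:(lra)) as [_ [Hl _]].
    assert (Hgc := Hg c ltac:(lra)).
    assert (Hneg : 1 * g c + c * dg c <= 0).
    { assert (c * (g c / c) <= c * - dg c) by (apply Rmult_le_compat_l; lra).
      replace (c * (g c / c)) with (g c) in H by (field; lra). lra. }
    assert (0 <= - (1 * g c + c * dg c) * (s2 - s1)) by (apply Rmult_le_pos; lra).
    lra.
Qed.

Lemma demand_per_price_antitone s : a <= s <= b -> g s / s <= g a / a.
Proof.
  intro H. pose proof (revenue_antitone a s ltac:(lra) ltac:(lra) ltac:(lra)).
  assert (Hgs := Hg s H). assert (Hga := Hg a ltac:(lra)).
  unfold Rdiv. apply (Rmult_le_reg_r (s * s * a)); [apply Rmult_lt_0_compat; nra|].
  replace (g s * / s * (s * s * a)) with (a * (s * g s)) by (field; lra).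
  replace (g a * / a * (s * s * a)) with (g a * (s * s)) by (field; lra).
  assert (a * (s * g s) <= a * (a * g a)) by (apply Rmult_le_compat_l; lra).
  assert (g a * (a * a) <= g a * (s * s)) by (apply Rmult_le_compat_l; nra).
  nra.
Qed.

(* [g + K id] is nondecreasing: [K] bounds [E g(s) / s] on [[a, b]]. *)
Lemma demand_drop_linear : g a * (1 - E * (b - a) / a) <= g b.
Proof.
  destruct (Rle_lt_or_eq_dec _ _ Hab) as [Hlt|Heq].
  2:{ subst. replace (E * (b - b) / b) with 0 by (field; lra). lra. }
  set (K := E * (g a / a)).
  destruct (MVT_cor2 (fun s => g s + K * s) (fun s => dg s + K * 1) a b Hlt) as [c [Hc1 Hc2]].
  - intros c Hc. destruct (dg_spec c ltac:(lra)) as [Hd1 _].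
    apply (derivable_pt_lim_plus g (fun s => K * s)); [exact Hd1|].
    apply (derivable_pt_lim_scal id K c 1). apply derivable_pt_lim_id.
  - destruct (dg_spec c ltac:(lra)) as [_ [_ Hl]].
    pose proof (demand_per_price_antitone c ltac:(lra)).
    assert (E * (g c / c) <= K) by (unfold K; apply Rmult_le_compat_l; lra).
    assert (0 <= (dg c + K * 1) * (b - a)) by (apply Rmult_le_pos; lra).
    assert (g a * (1 - E * (b - a) / a) = g a - K * (b - a)) by (unfold K; field; lra).
    lra.
Qed.

(* [g - K / id] is nondecreasing: [K / s^2] bounds [E g(s) / s] since [s g(s) <= a g(a)]. *)
Lemma demand_drop_reciprocal : g a * (1 - E * (1 - a / b)) <= g b.
Proof.
  destruct (Rle_lt_or_eq_dec _ _ Hab) as [Hlt|Heq].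
  2:{ subst. replace (1 - b / b) with 0 by (field; lra). lra. }
  set (K := E * a * g a).
  destruct (MVT_cor2 (fun s => g s + K * (- / s)) (fun s => dg s + K * (/ (s * s))) a b Hlt)
    as [c [Hc1 Hc2]].
  - intros c Hc. destruct (dg_spec c ltac:(lra)) as [Hd1 _].
    apply (derivable_pt_lim_plus g (fun s => K * (- / s))); [exact Hd1|].
    apply (derivable_pt_lim_scal (fun s => - / s) K c).
    assert (Hdv := derivable_pt_lim_div (fct_cte (-1)) id c 0 1
      (derivable_pt_lim_const (-1) c) (derivable_pt_lim_id c) ltac:(unfold id; lra)).
    replace (/ (c * c)) with ((0 * id c - 1 * fct_cte (-1) c) / (id c)²)
      by (unfold fct_cte, id, Rsqr; field; lra).
    eapply derivable_pt_lim_ext; [|exact Hdv].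
    intro s. unfold div_fct, fct_cte, id. unfold Rdiv. ring.
  - destruct (dg_spec c ltac:(lra)) as [_ [_ Hl]].
    pose proof (revenue_antitone a c ltac:(lra) ltac:(lra) ltac:(lra)).
    assert (Hgc := Hg c ltac:(lra)).
    assert (E * (g c / c) <= K / (c * c)).
    { unfold K, Rdiv. apply (Rmult_le_reg_r (c * c)); [nra|].
      replace (E * (g c * / c) * (c * c)) with (E * (c * g c)) by (field; lra).
      replace (E * a * g a * / (c * c) * (c * c)) with (E * (a * g a)) by (field; lra).
      apply Rmult_le_compat_l; lra. }
    assert (0 <= (dg c + K * / (c * c)) * (b - a)) by (apply Rmult_le_pos; unfold Rdiv in *; lra).
    assert (g a * (1 - E * (1 - a / b)) = g a + K * (- / a) - K * (- / b)) by (unfold K; field; lra).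
    lra.
Qed.
End Elasticity.

(** * Sums and price vectors *)

Lemma rsum_ext n f g : (forall j, (j < n)%nat -> f j = g j) -> rsum n f = rsum n g.
Proof. induction n; simpl; intros H; auto. rewrite IHn, H by (intros; try apply H; lia). reflexivity. Qed.

Lemma rsum_le n f g : (forall j, (j < n)%nat -> f j <= g j) -> rsum n f <= rsum n g.
Proof.
  induction n; simpl; intros H; [lra|].
  pose proof (IHn ltac:(intros; apply H; lia)). pose proof (H n ltac:(lia)). lra.
Qed.

Lemma rsum_plus n f g : rsum n (fun j => f j + g j) = rsum n f + rsum n g.
Proof. induction n; simpl; [lra|]. rewrite IHn. lra. Qed.

Lemma rsum_scal n a f : rsum n (fun j => a * f j) = a * rsum n f.
Proof. induction n; simpl; [lra|]. rewrite IHn. lra. Qed.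

Lemma rsum_opp n f : rsum n (fun j => - f j) = - rsum n f.
Proof. induction n; simpl; [lra|]. rewrite IHn. lra. Qed.

Lemma rsum_nonneg n f : (forall j, (j < n)%nat -> 0 <= f j) -> 0 <= rsum n f.
Proof.
  induction n; simpl; intros H; [lra|].
  pose proof (IHn ltac:(intros; apply H; lia)). pose proof (H n ltac:(lia)). lra.
Qed.

Definition zero_at (i : nat) (f : nat -> R) : nat -> R :=
  fun j => if Nat.eq_dec j i then 0 else f j.

Lemma rsum_extract n i f : (i < n)%nat -> rsum n f = f i + rsum n (zero_at i f).
Proof.
  induction n; intros H; [lia|]. simpl. unfold zero_at at 2.
  destruct (Nat.eq_dec n i) as [->|Hne].
  - rewrite (rsum_ext i (zero_at i f) f); [lra|].
    intros j Hj. unfold zero_at. destruct (Nat.eq_dec j i); [lia|auto].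
  - rewrite IHn by lia. lra.
Qed.

Lemma rsum_abs_nonneg n f : (forall j, (j < n)%nat -> 0 <= f j) ->
  rsum n (fun j => Rabs (f j)) = Rabs (rsum n f).
Proof.
  intros H. rewrite Rabs_right by (apply Rle_ge, rsum_nonneg; auto).
  apply rsum_ext. intros. apply Rabs_right, Rle_ge, H; auto.
Qed.

Lemma rsum_abs_same_sign n f :
  (forall j, (j < n)%nat -> 0 <= f j) \/ (forall j, (j < n)%nat -> f j <= 0) ->
  rsum n (fun j => Rabs (f j)) = Rabs (rsum n f).
Proof.
  intros [H|H]; [apply rsum_abs_nonneg; auto|].
  rewrite <- Rabs_Ropp, <- rsum_opp, <- rsum_abs_nonneg.
  - apply rsum_ext. intros. symmetry. apply Rabs_Ropp.
  - intros j Hj. specialize (H j Hj). lra.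
Qed.

Lemma upd_same z i s : upd z i s i = s.
Proof. unfold upd. destruct (Nat.eq_dec i i); congruence. Qed.

Lemma upd_other z i s j : j <> i -> upd z i s j = z j.
Proof. intros. unfold upd. destruct (Nat.eq_dec j i); congruence. Qed.

Lemma upd_upd z i s t : upd (upd z i s) i t = upd z i t.
Proof. apply functional_extensionality. intro j. unfold upd. destruct (Nat.eq_dec j i); auto. Qed.

Lemma upd_id z i : upd z i (z i) = z.
Proof. apply functional_extensionality. intro j. unfold upd. destruct (Nat.eq_dec j i); subst; auto. Qed.

Lemma pos_vec_upd n z i s : pos_vec n z -> 0 < s -> pos_vec n (upd z i s).
Proof. intros Hz Hs j Hj. unfold upd. destruct (Nat.eq_dec j i); auto. Qed.

Definition mark (i : nat) (dn : nat -> bool) : nat -> bool :=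
  fun j => if Nat.eq_dec j i then true else dn j.

(** * Price updates *)

Section SimultaneousUpdates.
Variables (n : nat) (w : nat -> R) (x : nat -> (nat -> R) -> R) (M E d lam c : R).
Hypothesis Hw : forall i, (i < n)%nat -> 0 < w i.
Hypothesis Hxpos : forall i p0, (i < n)%nat -> pos_vec n p0 -> 0 < x i p0.
Hypothesis Hxdep : forall i p0 q0, (i < n)%nat ->
  (forall k, (k < n)%nat -> p0 k = q0 k) -> x i p0 = x i q0.
Hypothesis Hspend : forall p0, pos_vec n p0 -> rsum n (fun i => p0 i * x i p0) = M.
Hypothesis Hwgs : forall p0 i j s, (i < n)%nat -> (j < n)%nat -> j <> i ->
  pos_vec n p0 -> p0 i <= s -> x j p0 <= x j (upd p0 i s).
Hypothesis HE : 1 <= E.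
Hypothesis Helast : forall p0 i, (i < n)%nat -> pos_vec n p0 ->
  exists l, derivable_pt_lim (fun s => x i (upd p0 i s)) (p0 i) l /\
    x i p0 / p0 i <= - l /\ - l <= E * (x i p0 / p0 i).
Hypothesis Hd : 2 <= d.
Hypothesis Hlam : 0 < lam.
Hypothesis HlamE : lam * E < 1.
Hypothesis Hc0 : 0 <= c.
Hypothesis Hc_lam : c <= lam.
Hypothesis Hc_d : c * (d - 1) <= lam.
Hypothesis Hcond : c + lam * (1 + 2 * E * d / (1 - lam * E)) <= 1.

(* Term of good [j] at price [P] and demand [X], with running average [Xb j] taken over the
   last [dl j] days; once [j] has been updated ([b = true]) its average restarts at the current
   demand and the term becomes [P * span3 X X (w j) = P * |X - w j|]. *)
Definition good_term (Xb dl : nat -> R) (b : bool) (P X : R) (j : nat) : R :=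
  if b then P * Rabs (X - w j)
  else P * (span3 X (Xb j) (w j) - c * Rabs (w j - Xb j) * dl j).

Definition marked_potential Xb dl (z : nat -> R) (dn : nat -> bool) : R :=
  rsum n (fun j => good_term Xb dl (dn j) (z j) (x j z) j).

Lemma good_term_lipschitz Xb dl b P X1 X2 j : 0 <= P ->
  good_term Xb dl b P X1 j - good_term Xb dl b P X2 j <= P * Rabs (X1 - X2).
Proof.
  intros HP. unfold good_term. destruct b.
  - pose proof (Rabs_triang_inv (X1 - w j) (X2 - w j)) as H.
    replace (X1 - w j - (X2 - w j)) with (X1 - X2) in H by ring.
    assert (P * (Rabs (X1 - w j) - Rabs (X2 - w j)) <= P * Rabs (X1 - X2))
      by (apply Rmult_le_compat_l; lra).
    lra.
  - pose proof (span3_lipschitz1 X1 X2 (Xb j) (w j)).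
    assert (P * (span3 X1 (Xb j) (w j) - span3 X2 (Xb j) (w j)) <= P * Rabs (X1 - X2))
      by (apply Rmult_le_compat_l; lra).
    lra.
Qed.

Lemma wgs_same_sign z i s : pos_vec n z -> (i < n)%nat -> 0 < s ->
  let f := zero_at i (fun j => z j * (x j (upd z i s) - x j z)) in
  (forall j, (j < n)%nat -> 0 <= f j) \/ (forall j, (j < n)%nat -> f j <= 0).
Proof.
  intros Hz Hi Hs f. unfold f, zero_at. destruct (Rle_dec (z i) s) as [Hup|Hdown].
  - left. intros j Hj. destruct (Nat.eq_dec j i) as [|Hji]; [lra|].
    pose proof (Hwgs z i j s Hi Hj Hji Hz Hup). pose proof (Hz j Hj). nra.
  - right. intros j Hj. destruct (Nat.eq_dec j i) as [|Hji]; [lra|].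
    pose proof (Hwgs (upd z i s) i j (z i) Hi Hj Hji (pos_vec_upd n z i s Hz Hs)) as H.
    rewrite upd_same, upd_upd, upd_id in H. pose proof (Hz j Hj). nra.
Qed.

Lemma others_spending_change z i s : pos_vec n z -> (i < n)%nat -> 0 < s ->
  rsum n (zero_at i (fun j => z j * (x j (upd z i s) - x j z)))
    = z i * x i z - s * x i (upd z i s).
Proof.
  intros Hz Hi Hs.
  pose proof (Hspend z Hz) as H1. pose proof (Hspend (upd z i s) (pos_vec_upd n z i s Hz Hs)) as H2.
  rewrite (rsum_extract n i) in H1, H2 by auto. rewrite upd_same in H2.
  rewrite (rsum_ext n _ (fun j => zero_at i (fun j => upd z i s j * x j (upd z i s)) j
                                  + - zero_at i (fun j => z j * x j z) j)).
  - rewrite rsum_plus, rsum_opp. lra.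
  - intros j Hj. unfold zero_at. destruct (Nat.eq_dec j i); [lra|].
    rewrite upd_other by auto. ring.
Qed.

(* The other terms move by at most [sum_j z_j |Δx_j|]; by WGS the changes [z_j Δx_j] have one
   sign, and by fixed spending they add up to minus the change of spending on good [i]. *)
Lemma potential_upd_le Xb dl z dn i s : pos_vec n z -> (i < n)%nat -> 0 < s -> dn i = false ->
  s * Rabs (x i (upd z i s) - w i) + Rabs (s * x i (upd z i s) - z i * x i z)
    <= z i * (span3 (x i z) (Xb i) (w i) - c * Rabs (w i - Xb i) * dl i) ->
  marked_potential Xb dl (upd z i s) (mark i dn) <= marked_potential Xb dl z dn.
Proof.
  intros Hz Hi Hs Hdn HK. unfold marked_potential.
  rewrite (rsum_extract n i _ Hi), (rsum_extract n i (fun j => good_term Xb dl (dn j) (z j) (x j z) j) Hi).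
  unfold mark at 1. destruct (Nat.eq_dec i i); [|congruence]. rewrite upd_same, Hdn.
  unfold good_term at 1 3.
  assert (HL : rsum n (zero_at i (fun j => good_term Xb dl (mark i dn j) (upd z i s j) (x j (upd z i s)) j))
     <= rsum n (zero_at i (fun j => good_term Xb dl (dn j) (z j) (x j z) j))
        + rsum n (fun j => Rabs (zero_at i (fun j => z j * (x j (upd z i s) - x j z)) j))).
  { rewrite <- rsum_plus. apply rsum_le. intros j Hj. unfold zero_at, mark.
    destruct (Nat.eq_dec j i); [rewrite Rabs_R0; lra|].
    rewrite upd_other by auto. pose proof (Hz j Hj).
    pose proof (good_term_lipschitz Xb dl (dn j) (z j) (x j (upd z i s)) (x j z) j ltac:(lra)).
    rewrite Rabs_mult, (Rabs_right (z j)) by lra. lra. }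
  rewrite rsum_abs_same_sign, others_spending_change, Rabs_minus_sym in HL by (try apply wgs_same_sign; auto).
  lra.
Qed.

Lemma own_demand_elastic z i : pos_vec n z -> (i < n)%nat -> forall s, 0 < s ->
  0 < x i (upd z i s) /\
  exists l, derivable_pt_lim (fun t => x i (upd z i t)) s l /\
    x i (upd z i s) / s <= - l /\ - l <= E * (x i (upd z i s) / s).
Proof.
  intros Hz Hi s Hs. split; [apply Hxpos, pos_vec_upd; auto|].
  destruct (Helast (upd z i s) i Hi (pos_vec_upd n z i s Hz Hs)) as [l [Hl1 Hl2]].
  exists l. rewrite upd_same in Hl1, Hl2. split; auto.
  eapply derivable_pt_lim_ext; [|exact Hl1]. intro t. simpl. rewrite upd_upd. reflexivity.
Qed.

Lemma demand_response_raise z i s : pos_vec n z -> (i < n)%nat -> z i <= s ->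
  s * x i (upd z i s) <= z i * x i z /\
  x i z * (1 - E * (s - z i) / z i) <= x i (upd z i s).
Proof.
  intros Hz Hi Hs. pose proof (Hz i Hi).
  pose proof (own_demand_elastic z i Hz Hi) as Hg.
  assert (Hg' : forall t, z i <= t <= s -> 0 < x i (upd z i t)) by (intros; apply Hg; lra).
  assert (Hd' : forall t, z i <= t <= s -> exists l, derivable_pt_lim (fun t => x i (upd z i t)) t l /\
    x i (upd z i t) / t <= - l /\ - l <= E * (x i (upd z i t) / t)) by (intros; apply Hg; lra).
  pose proof (revenue_antitone _ E (z i) s H Hg' Hd' (z i) s ltac:(lra) Hs ltac:(lra)).
  pose proof (demand_drop_linear _ E (z i) s ltac:(lra) H Hs Hg' Hd').
  cbv beta in *. rewrite upd_id in *. auto.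
Qed.

Lemma demand_response_cut z i s : pos_vec n z -> (i < n)%nat -> 0 < s <= z i ->
  z i * x i z <= s * x i (upd z i s) /\
  x i (upd z i s) * (1 - E * (1 - s / z i)) <= x i z.
Proof.
  intros Hz Hi Hs.
  pose proof (own_demand_elastic z i Hz Hi) as Hg.
  assert (Hg' : forall t, s <= t <= z i -> 0 < x i (upd z i t)) by (intros; apply Hg; lra).
  assert (Hd' : forall t, s <= t <= z i -> exists l, derivable_pt_lim (fun t => x i (upd z i t)) t l /\
    x i (upd z i t) / t <= - l /\ - l <= E * (x i (upd z i t) / t)) by (intros; apply Hg; lra).
  pose proof (revenue_antitone _ E s (z i) (proj1 Hs) Hg' Hd' s (z i) ltac:(lra) ltac:(lra) ltac:(lra)).
  pose proof (demand_drop_reciprocal _ E s (z i) ltac:(lra) (proj1 Hs) ltac:(lra) Hg' Hd').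
  cbv beta in *. rewrite upd_id in *. auto.
Qed.

Lemma potential_update_step Xb dl z dn i : pos_vec n z -> (i < n)%nat -> dn i = false ->
  0 <= Xb i <= d * w i -> 0 <= dl i <= 1 ->
  (price_rate lam (Xb i) (w i) < 0 -> x i z <= d * w i) ->
  marked_potential Xb dl (upd z i (z i * (1 + price_rate lam (Xb i) (w i)))) (mark i dn)
    <= marked_potential Xb dl z dn.
Proof.
  intros Hz Hi Hdn HXb Hdl Hcut.
  pose proof (Hw i Hi). pose proof (Hz i Hi). assert (lam < 1) by nra.
  pose proof (price_rate_bounds lam (Xb i) (w i) ltac:(lra) ltac:(lra) (proj1 HXb)) as Hr.
  set (r := price_rate lam (Xb i) (w i)) in *. set (s := z i * (1 + r)).
  assert (Hs : 0 < s) by (unfold s; nra).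
  apply potential_upd_le; auto.
  set (xt := x i z). set (xh := x i (upd z i s)).
  assert (0 < xt) by (apply Hxpos; auto). assert (0 < xh) by (apply Hxpos, pos_vec_upd; auto).
  assert (HK : (1 + r) * Rabs (xh - w i) + Rabs ((1 + r) * xh - xt)
      <= span3 xt (Xb i) (w i) - c * Rabs (w i - Xb i) * dl i).
  { apply (update_bound E d lam c); auto; try lra.
    - intros Hr0. fold r in Hr0 |- *. destruct (demand_response_raise z i s Hz Hi ltac:(unfold s; nra)) as [Hrev Hdrop].
      fold xt xh in Hrev, Hdrop. split.
      + apply (Rmult_le_reg_l (z i)); [lra|]. unfold s in Hrev. nra.
      + replace (E * (s - z i) / z i) with (E * r) in Hdrop by (unfold s; field; lra). lra.
    - intros Hr0. fold r in Hr0 |- *. destruct (demand_response_cut z i s Hz Hi ltac:(unfold s; nra)) as [Hrev Hdrop].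
      fold xt xh in Hrev, Hdrop. split; [|split; auto].
      + apply (Rmult_le_reg_l (z i)); [lra|]. unfold s in Hrev. nra.
      + replace (1 - E * (1 - s / z i)) with (1 + E * r) in Hdrop by (unfold s; field; lra). lra. }
  replace (s * xh - z i * xt) with (z i * ((1 + r) * xh - xt)) by (unfold s; ring).
  rewrite Rabs_mult, (Rabs_right (z i)) by lra. unfold s.
  replace (z i * (1 + r) * Rabs (xh - w i) + z i * Rabs ((1 + r) * xh - xt))
    with (z i * ((1 + r) * Rabs (xh - w i) + Rabs ((1 + r) * xh - xt))) by ring.
  apply Rmult_le_compat_l; lra.
Qed.

Variables (Xb dl q q' : nat -> R) (U : nat -> bool).
Hypothesis Hq : pos_vec n q.
Hypothesis HU1 : forall i, (i < n)%nat -> U i = true -> q' i = q i * (1 + price_rate lam (Xb i) (w i)).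
Hypothesis HU0 : forall i, (i < n)%nat -> U i = false -> q' i = q i.
Hypothesis HXb : forall i, (i < n)%nat -> 0 <= Xb i <= d * w i.
Hypothesis Hdl : forall i, (i < n)%nat -> 0 <= dl i <= 1.
Hypothesis Hxq : forall i, (i < n)%nat -> x i q <= d * w i.

Fixpoint apply_updates (sel : nat -> bool) (z : nat -> R) (m : nat) : nat -> R :=
  match m with
  | O => z
  | S k => if sel k then upd (apply_updates sel z k) k (q' k) else apply_updates sel z k
  end.

Fixpoint mark_updates (sel dn : nat -> bool) (m : nat) : nat -> bool :=
  match m with
  | O => dn
  | S k => if sel k then mark k (mark_updates sel dn k) else mark_updates sel dn k
  end.

Lemma apply_updates_eq sel z m j :
  apply_updates sel z m j = if (j <? m)%nat && sel j then q' j else z j.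
Proof.
  induction m as [|m IH]; simpl; [destruct j; reflexivity|].
  destruct (Nat.eq_dec j m) as [->|Hne].
  - rewrite Nat.ltb_irrefl in IH. rewrite (proj2 (Nat.ltb_lt m (S m))) by lia.
    destruct (sel m); simpl in *; [apply upd_same | exact IH].
  - replace (j <? S m)%nat with (j <? m)%nat by (destruct (Nat.ltb_spec j m), (Nat.ltb_spec j (S m)); auto; lia).
    destruct (sel m); [rewrite upd_other by auto|]; exact IH.
Qed.

Lemma mark_updates_eq sel dn m j : mark_updates sel dn m j = ((j <? m)%nat && sel j) || dn j.
Proof.
  induction m as [|m IH]; simpl; [destruct j; reflexivity|].
  destruct (Nat.eq_dec j m) as [->|Hne].
  - rewrite Nat.ltb_irrefl in IH. rewrite (proj2 (Nat.ltb_lt m (S m))) by lia.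
    destruct (sel m); simpl in *; [unfold mark; destruct (Nat.eq_dec m m); congruence | exact IH].
  - replace (j <? S m)%nat with (j <? m)%nat by (destruct (Nat.ltb_spec j m), (Nat.ltb_spec j (S m)); auto; lia).
    destruct (sel m); [unfold mark; destruct (Nat.eq_dec j m); [lia|]|]; exact IH.
Qed.

Lemma updated_prices_pos : pos_vec n q'.
Proof.
  intros i Hi. pose proof (Hq i Hi). destruct (U i) eqn:Hu; [|rewrite HU0; auto].
  rewrite HU1 by auto. assert (lam < 1) by nra.
  pose proof (price_rate_bounds lam (Xb i) (w i) ltac:(lra) (Hw i Hi) (proj1 (HXb i Hi))). nra.
Qed.

Lemma apply_updates_pos sel z m : pos_vec n z -> pos_vec n (apply_updates sel z m).
Proof.
  intros Hz j Hj. rewrite apply_updates_eq.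
  destruct (_ && _); [apply updated_prices_pos|apply Hz]; auto.
Qed.

Lemma potential_apply_updates sel z dn m : (m <= n)%nat -> pos_vec n z ->
  (forall j, (j < n)%nat -> sel j = true -> U j = true /\ dn j = false /\ z j = q j) ->
  (forall k, (k < m)%nat -> sel k = true -> price_rate lam (Xb k) (w k) < 0 ->
     x k (apply_updates sel z k) <= d * w k) ->
  marked_potential Xb dl (apply_updates sel z m) (mark_updates sel dn m)
    <= marked_potential Xb dl z dn.
Proof.
  intros Hm Hz Hsel Hcut. induction m as [|m IH]; simpl; [lra|].
  destruct (sel m) eqn:Hs; [|apply IH; auto; lia].
  destruct (Hsel m ltac:(lia) Hs) as (Hu & Hdn & Hzq).
  eapply Rle_trans; [|apply IH; auto; lia].
  assert (Hm_old : apply_updates sel z m m = q m)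
    by (rewrite apply_updates_eq, Nat.ltb_irrefl; exact Hzq).
  rewrite (HU1 m ltac:(lia) Hu), <- Hm_old.
  apply potential_update_step; auto; try lia.
  - apply apply_updates_pos; auto.
  - rewrite mark_updates_eq, Nat.ltb_irrefl. exact Hdn.
Qed.

(* Updates are applied one good at a time, all price cuts first: a cut needs the demand bound
   [x <= d w] at the current prices, and earlier cuts only lower the other demands (WGS). *)
Definition is_cut j : bool := if Rlt_dec (price_rate lam (Xb j) (w j)) 0 then true else false.
Definition cut_update j := U j && is_cut j.
Definition raise_update j := U j && negb (is_cut j).

Lemma price_cuts_lower_demand m j : (j < n)%nat -> (m <= j)%nat ->
  x j (apply_updates cut_update q m) <= x j q.
Proof.
  intros Hj. induction m as [|m IH]; intros Hm; simpl; [lra|].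
  destruct (cut_update m) eqn:Hc; [|apply IH; lia].
  eapply Rle_trans; [|apply IH; lia].
  set (A := apply_updates cut_update q m).
  assert (HA : A m = q m) by (unfold A; rewrite apply_updates_eq, Nat.ltb_irrefl; reflexivity).
  unfold cut_update in Hc. apply andb_prop in Hc as [Hu Hneg].
  unfold is_cut in Hneg. destruct (Rlt_dec (price_rate lam (Xb m) (w m)) 0) as [Hr|]; [|discriminate].
  assert (Hq'm : 0 < q' m <= A m).
  { split; [apply updated_prices_pos; lia|]. rewrite HA, HU1 by (auto; lia). pose proof (Hq m ltac:(lia)). nra. }
  pose proof (Hwgs (upd A m (q' m)) m j (A m) ltac:(lia) Hj ltac:(lia)
    (pos_vec_upd n A m (q' m) (apply_updates_pos _ _ _ Hq) ltac:(lra))) as H.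
  rewrite upd_same, upd_upd, upd_id in H. apply H. lra.
Qed.

Lemma potential_simultaneous_updates :
  marked_potential Xb dl q' U <= marked_potential Xb dl q (fun _ => false).
Proof.
  set (z1 := apply_updates cut_update q n).
  set (dn1 := mark_updates cut_update (fun _ => false) n).
  assert (H1 : marked_potential Xb dl z1 dn1 <= marked_potential Xb dl q (fun _ => false)).
  { apply potential_apply_updates; auto.
    - intros j Hj Hs. unfold cut_update in Hs. apply andb_prop in Hs as [Hu _]. auto.
    - intros k Hk _ _. eapply Rle_trans; [apply price_cuts_lower_demand|apply Hxq]; lia. }
  assert (H2 : marked_potential Xb dl (apply_updates raise_update z1 n) (mark_updates raise_update dn1 n)
      <= marked_potential Xb dl z1 dn1).
  { apply potential_apply_updates; auto.
    - apply apply_updates_pos; auto.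
    - intros j Hj Hs. unfold raise_update in Hs. apply andb_prop in Hs as [Hu Hneg].
      unfold z1, dn1. rewrite apply_updates_eq, mark_updates_eq.
      unfold cut_update. rewrite Hu, (negb_true_iff _) in *. rewrite Hneg, !andb_false_r. auto.
    - intros k _ Hs Hr. unfold raise_update in Hs. apply andb_prop in Hs as [_ Hneg].
      unfold is_cut in Hneg. destruct (Rlt_dec (price_rate lam (Xb k) (w k)) 0); [discriminate|lra]. }
  eapply Rle_trans; [|exact H1]. eapply Rle_trans; [|exact H2].
  right. apply rsum_ext. intros j Hj.
  assert (Hz : forall k, (k < n)%nat -> apply_updates raise_update z1 n k = q' k).
  { intros k Hk. unfold z1. rewrite !apply_updates_eq, (proj2 (Nat.ltb_lt k n)) by auto.
    unfold raise_update, cut_update.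
    destruct (U k) eqn:Hu; destruct (is_cut k); simpl; auto; symmetry; auto. }
  rewrite (Hxdep j q' (apply_updates raise_update z1 n)), Hz by (auto; intros; symmetry; auto).
  unfold dn1. rewrite !mark_updates_eq, (proj2 (Nat.ltb_lt j n)) by auto.
  unfold raise_update, cut_update. destruct (U j), (is_cut j); reflexivity.
Qed.
End SimultaneousUpdates.

(** * Integrals of step functions *)

Lemma IsStepFun_const_inside f a b k : a <= b -> (forall r, a < r < b -> f r = k) -> IsStepFun f a b.
Proof.
  intros Hab Hf. exists (cons a (cons b nil)), (cons k nil). repeat split.
  - intros i Hi. simpl in Hi. inversion Hi; [simpl; assumption | lia].
  - simpl. unfold Rmin. destruct (Rle_dec a b); [reflexivity|lra].
  - simpl. unfold Rmax. destruct (Rle_dec a b); [reflexivity|lra].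
  - intros i Hi. simpl in Hi. destruct i; [intros r Hr; apply Hf, Hr | lia].
Qed.

Lemma Riemann_integrable_const_inside f a b k : a <= b -> (forall r, a < r < b -> f r = k) ->
  Riemann_integrable f a b.
Proof.
  intros Hab Hf eps. exists (mkStepFun (IsStepFun_const_inside f a b k Hab Hf)).
  exists (mkStepFun (StepFun_P4 a b 0)). split.
  - intros t _. simpl. unfold fct_cte. rewrite Rminus_diag, Rabs_R0. lra.
  - rewrite StepFun_P18, Rmult_0_l, Rabs_R0. apply cond_pos.
Qed.

Lemma RiemannInt_const_inside f a b k (pr : Riemann_integrable f a b) : a <= b ->
  (forall r, a < r < b -> f r = k) -> RiemannInt pr = k * (b - a).
Proof.
  intros Hab Hf. rewrite (RiemannInt_P18 pr (RiemannInt_P14 a b k) Hab)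
    by (intros; unfold fct_cte; apply Hf; auto).
  apply RiemannInt_P15.
Qed.

Lemma integral_RiemannInt f a b (pr : Riemann_integrable f a b) : integral f a b = RiemannInt pr.
Proof.
  unfold integral.
  destruct (epsilon_spec (inhabits 0) (fun I => exists pr, RiemannInt pr = I)
    (ex_intro _ (RiemannInt pr) (ex_intro _ pr eq_refl))) as [pr' H].
  rewrite <- H. apply RiemannInt_P5.
Qed.

Lemma integral_empty f a : integral f a a = 0.
Proof.
  rewrite (integral_RiemannInt _ _ _ (RiemannInt_P7 f a)), (RiemannInt_const_inside f a a 0); [ring|lra|intros; lra].
Qed.

Lemma integral_bounds f a b m M (pr : Riemann_integrable f a b) : a <= b ->
  (forall r, a < r < b -> m <= f r <= M) -> m * (b - a) <= integral f a b <= M * (b - a).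
Proof.
  intros Hab Hf. rewrite (integral_RiemannInt _ _ _ pr).
  pose proof (RiemannInt_P19 (RiemannInt_P14 a b m) pr Hab
    ltac:(intros; unfold fct_cte; apply Hf; auto)) as Hlo.
  pose proof (RiemannInt_P19 pr (RiemannInt_P14 a b M) Hab
    ltac:(intros; unfold fct_cte; apply Hf; auto)) as Hhi.
  rewrite RiemannInt_P15 in Hlo, Hhi. lra.
Qed.

(** * The price trajectory *)

Fixpoint nsum (m : nat) (f : nat -> nat) : nat :=
  match m with O => O | S m' => (nsum m' f + f m')%nat end.

Lemma nsum_le m f g : (forall i, (i < m)%nat -> (f i <= g i)%nat) -> (nsum m f <= nsum m g)%nat.
Proof.
  induction m; simpl; intros H; [lia|].
  pose proof (IHm ltac:(intros; apply H; lia)). pose proof (H m ltac:(lia)). lia.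
Qed.

Lemma nsum_lt m f g i : (forall i, (i < m)%nat -> (f i <= g i)%nat) -> (i < m)%nat -> (f i < g i)%nat ->
  (nsum m f < nsum m g)%nat.
Proof.
  induction m; simpl; intros H Hi Hlt; [lia|].
  destruct (Nat.eq_dec i m) as [->|].
  - pose proof (nsum_le m f g ltac:(intros; apply H; lia)). lia.
  - pose proof (IHm ltac:(intros; apply H; lia) ltac:(lia) Hlt). pose proof (H m ltac:(lia)). lia.
Qed.

Section Trajectory.
Variables (n : nat) (w : nat -> R) (x : nat -> (nat -> R) -> R) (u : nat -> nat -> R)
  (p : R -> nat -> R) (d lam : R).
Hypothesis Hn : (0 < n)%nat.
Hypothesis Hw : forall i, (i < n)%nat -> 0 < w i.
Hypothesis Hxpos : forall i p0, (i < n)%nat -> pos_vec n p0 -> 0 < x i p0.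
Hypothesis Hxdep : forall i p0 q0, (i < n)%nat ->
  (forall k, (k < n)%nat -> p0 k = q0 k) -> x i p0 = x i q0.
Hypothesis Hlam : 0 < lam.
Hypothesis Hlam1 : lam < 1.
Hypothesis Hu0 : forall i, (i < n)%nat -> u i O = 0.
Hypothesis Huinc : forall i k, (i < n)%nat -> u i k < u i (S k).
Hypothesis Hugap : forall i k, (i < n)%nat -> u i (S k) <= u i k + 1.
Hypothesis Huunb : forall i T, (i < n)%nat -> exists k, T < u i k.
Hypothesis Hp0 : pos_vec n (p 0).
Hypothesis Hpconst : forall i k t, (i < n)%nat -> u i k <= t < u i (S k) ->
  p t i = p (u i k) i.
Hypothesis Hupdate : forall i k, (i < n)%nat ->
  p (u i (S k)) i = p (u i k) i *
    (1 + lam * Rmin 1 ((/ (u i (S k) - u i k) *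
      integral (fun s => x i (p s)) (u i k) (u i (S k)) - w i) / w i)).
Hypothesis Hdem : forall i t, (i < n)%nat -> 0 <= t -> x i (p t) <= d * w i.
Variables (M E alpha1 : R).
Hypothesis Hspend : forall p0, pos_vec n p0 -> rsum n (fun i => p0 i * x i p0) = M.
Hypothesis Hwgs : forall p0 i j s, (i < n)%nat -> (j < n)%nat -> j <> i ->
  pos_vec n p0 -> p0 i <= s -> x j p0 <= x j (upd p0 i s).
Hypothesis HE : 1 <= E.
Hypothesis Helast : forall p0 i, (i < n)%nat -> pos_vec n p0 ->
  exists l, derivable_pt_lim (fun s => x i (upd p0 i s)) (p0 i) l /\
    x i p0 / p0 i <= - l /\ - l <= E * (x i p0 / p0 i).
Hypothesis Hd : 2 <= d.
Hypothesis HlamE : lam * E < 1.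
Hypothesis Hc0 : 0 <= alpha1 * lam.
Hypothesis Hc13 : alpha1 * lam <= 1 / 3.
Hypothesis Hc_lam : alpha1 * lam <= lam.
Hypothesis Hc_d : alpha1 * lam * (d - 1) <= lam.
Hypothesis Hcond : alpha1 * lam + lam * (1 + 2 * E * d / (1 - lam * E)) <= 1.

Lemma update_time_le i k m : (i < n)%nat -> (k <= m)%nat -> u i k <= u i m.
Proof.
  intros Hi H. induction H; [lra|]. pose proof (Huinc i m Hi). lra.
Qed.

Lemma update_time_nonneg i k : (i < n)%nat -> 0 <= u i k.
Proof. intros Hi. rewrite <- (Hu0 i Hi). apply update_time_le; auto; lia. Qed.

Lemma update_index_ex i s : (i < n)%nat -> 0 <= s -> exists k, u i k <= s < u i (S k).
Proof.
  intros Hi Hs. destruct (Huunb i s Hi) as [K HK].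
  induction K as [|K IH]; [rewrite Hu0 in HK by auto; lra|].
  destruct (Rlt_dec s (u i K)); auto. exists K. lra.
Qed.

Lemma update_index_unique i s k1 k2 : (i < n)%nat ->
  u i k1 <= s < u i (S k1) -> u i k2 <= s < u i (S k2) -> k1 = k2.
Proof.
  intros Hi H1 H2. destruct (Nat.lt_trichotomy k1 k2) as [H|[H|H]]; auto.
  - pose proof (update_time_le i (S k1) k2 Hi H). lra.
  - pose proof (update_time_le i (S k2) k1 Hi H). lra.
Qed.

Definition update_index i s : nat := epsilon (inhabits O) (fun k => u i k <= s < u i (S k)).

Lemma update_index_spec i s : (i < n)%nat -> 0 <= s ->
  u i (update_index i s) <= s < u i (S (update_index i s)).
Proof. intros Hi Hs. unfold update_index. apply epsilon_spec, update_index_ex; auto. Qed.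

Lemma update_index_eq i s k : (i < n)%nat -> u i k <= s < u i (S k) -> update_index i s = k.
Proof.
  intros Hi H. apply (update_index_unique i s); auto.
  apply update_index_spec; auto. pose proof (update_time_nonneg i k Hi). lra.
Qed.

Lemma update_index_mono i s s' : (i < n)%nat -> 0 <= s -> s <= s' ->
  (update_index i s <= update_index i s')%nat.
Proof.
  intros Hi Hs Hss. destruct (Nat.le_gt_cases (update_index i s) (update_index i s')) as [|l]; auto.
  pose proof (update_index_spec i s Hi Hs). pose proof (update_index_spec i s' Hi ltac:(lra)).
  pose proof (update_time_le i (S (update_index i s')) (update_index i s) Hi l). lra.
Qed.

Lemma tau_eq i s : (i < n)%nat -> 0 <= s -> tau (u i) s = u i (update_index i s).
Proof.
  intros Hi Hs. unfold tau.
  destruct (epsilon_spec (inhabits 0) (fun s0 => exists k, u i k = s0 /\ u i k <= s /\ s < u i (S k))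
    (ex_intro _ _ (ex_intro _ _ (conj eq_refl (update_index_spec i s Hi Hs))))) as [k [<- Hk]].
  f_equal. symmetry. apply update_index_eq; auto.
Qed.

Definition next_update i s := u i (S (update_index i s)).

Lemma next_update_bounds i s : (i < n)%nat -> 0 <= s -> s < next_update i s <= s + 1.
Proof.
  intros Hi Hs. unfold next_update.
  pose proof (update_index_spec i s Hi Hs). pose proof (Hugap i (update_index i s) Hi). lra.
Qed.

Lemma tau_bounds i s : (i < n)%nat -> 0 <= s ->
  0 <= tau (u i) s <= s /\ next_update i s - tau (u i) s <= 1.
Proof.
  intros Hi Hs. rewrite tau_eq by auto. unfold next_update.
  pose proof (update_index_spec i s Hi Hs). pose proof (update_time_nonneg i (update_index i s) Hi).
  pose proof (Hugap i (update_index i s) Hi). lra.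
Qed.

(* The first update of any good strictly after [s], or [s + 1] if it comes later. *)
Fixpoint next_event_upto (m : nat) (s : R) : R :=
  match m with O => s + 1 | S m' => Rmin (next_event_upto m' s) (next_update m' s) end.

Definition next_event s := next_event_upto n s.

Lemma next_event_upto_spec m s : (m <= n)%nat -> 0 <= s ->
  s < next_event_upto m s <= s + 1 /\
  (forall i, (i < m)%nat -> next_event_upto m s <= next_update i s) /\
  (next_event_upto m s = s + 1 \/ exists i, (i < m)%nat /\ next_event_upto m s = next_update i s).
Proof.
  intros Hm Hs. induction m as [|m IH]; simpl.
  - split; [lra|]. split; [intros; lia|]. left; auto.
  - destruct (IH ltac:(lia)) as [H1 [H2 H3]]. pose proof (next_update_bounds m s ltac:(lia) Hs).
    unfold Rmin. destruct (Rle_dec (next_event_upto m s) (next_update m s)).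
    + split; [lra|]. split.
      * intros i Hi. destruct (Nat.eq_dec i m) as [->|]; [lra|]. apply H2. lia.
      * destruct H3 as [H3|[i [Hi H3]]]; [left|right; exists i; split]; auto.
    + split; [lra|]. split.
      * intros i Hi. destruct (Nat.eq_dec i m) as [->|]; [lra|]. pose proof (H2 i ltac:(lia)). lra.
      * right. exists m. auto.
Qed.

Lemma next_event_bounds s : 0 <= s -> s < next_event s <= s + 1.
Proof. intros. apply next_event_upto_spec; auto. Qed.

Lemma next_event_le s i : 0 <= s -> (i < n)%nat -> next_event s <= next_update i s.
Proof. intros. apply next_event_upto_spec; auto. Qed.

Lemma next_event_attained s : 0 <= s ->
  exists i, (i < n)%nat /\ next_event s = next_update i s.
Proof.
  intros Hs. destruct (proj2 (proj2 (next_event_upto_spec n s (le_n n) Hs))) as [H|H]; auto.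
  exists O. split; auto. pose proof (next_event_le s O Hs Hn). pose proof (next_update_bounds O s Hn Hs).
  unfold next_event in *. lra.
Qed.

Lemma update_index_before_event s r i : 0 <= s -> s <= r < next_event s -> (i < n)%nat ->
  update_index i r = update_index i s.
Proof.
  intros Hs Hr Hi. apply update_index_eq; auto.
  pose proof (update_index_spec i s Hi Hs). pose proof (next_event_le s i Hs Hi). unfold next_update in *. lra.
Qed.

Lemma update_index_at_event s i : 0 <= s -> (i < n)%nat ->
  (next_event s < next_update i s /\ update_index i (next_event s) = update_index i s) \/
  (next_event s = next_update i s /\ update_index i (next_event s) = S (update_index i s)).
Proof.
  intros Hs Hi. pose proof (next_event_bounds s Hs).
  pose proof (update_index_spec i s Hi Hs).
  destruct (next_event_le s i Hs Hi) as [Hlt|Heq]; [left|right]; split; auto;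
    apply update_index_eq; auto; unfold next_update in *; [lra|].
  rewrite Heq. split; [lra|]. apply Huinc; auto.
Qed.

Definition updates_done s := nsum n (fun i => update_index i s).

Lemma updates_done_mono s s' : 0 <= s -> s <= s' -> (updates_done s <= updates_done s')%nat.
Proof. intros. apply nsum_le. intros. apply update_index_mono; auto. Qed.

Lemma updates_done_at_event s : 0 <= s -> (updates_done s < updates_done (next_event s))%nat.
Proof.
  intros Hs. destruct (next_event_attained s Hs) as [i [Hi Hei]].
  pose proof (next_event_bounds s Hs).
  apply (nsum_lt n _ _ i); auto.
  - intros. apply update_index_mono; auto; lra.
  - destruct (update_index_at_event s i Hs Hi) as [[Hlt _]|[_ ->]]; [lra|lia].
Qed.

(* Induction along the events: between consecutive events every price is constant; the
   number of updates performed so far strictly increases from one event to the next. *)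
Lemma event_ind (Q : R -> Prop) s0 T : 0 <= s0 <= T -> Q s0 ->
  (forall s, s0 <= s -> s < T -> Q s -> forall s', s < s' -> s' <= next_event s -> s' <= T -> Q s') ->
  Q T.
Proof.
  intros HT Q0 Hstep.
  assert (Hgen : forall N s, s0 <= s <= T -> Q s -> (updates_done T - updates_done s <= N)%nat -> Q T).
  { induction N as [|N IH]; intros s Hs Qs HN;
      pose proof (next_event_bounds s ltac:(lra));
      (destruct (Rle_dec T (next_event s));
       [destruct (Req_dec s T) as [->|]; [auto | apply (Hstep s); auto; lra]|]);
      pose proof (updates_done_at_event s ltac:(lra));
      pose proof (updates_done_mono (next_event s) T ltac:(lra) ltac:(lra)); [lia|].
    apply (IH (next_event s)); [lra | apply (Hstep s); auto; lra | lia]. }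
  apply (Hgen (updates_done T - updates_done s0)%nat s0); auto. lra.
Qed.

Let demand i r := x i (p r).

Lemma price_at_update_index i s : (i < n)%nat -> 0 <= s -> p s i = p (tau (u i) s) i.
Proof. intros. rewrite tau_eq by auto. apply Hpconst; auto. apply update_index_spec; auto. Qed.

Lemma price_same_index i s r : (i < n)%nat -> 0 <= s -> 0 <= r ->
  update_index i r = update_index i s -> p r i = p s i.
Proof.
  intros Hi Hs Hr Hk. rewrite (price_at_update_index i r), (price_at_update_index i s), !tau_eq, Hk; auto.
Qed.

Lemma price_const_before_event s r i : 0 <= s -> s <= r < next_event s -> (i < n)%nat ->
  p r i = p s i.
Proof. intros. apply price_same_index; try apply update_index_before_event; auto; lra. Qed.

Lemma demand_const_before_event s r i : 0 <= s -> s <= r < next_event s -> (i < n)%nat ->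
  demand i r = demand i s.
Proof. intros. apply Hxdep; auto. intros. apply price_const_before_event; auto. Qed.

Lemma demand_integrable T : 0 <= T -> forall i, (i < n)%nat -> forall a, 0 <= a <= T ->
  inhabited (Riemann_integrable (demand i) a T).
Proof.
  intros HT. apply (event_ind (fun T => forall i, (i < n)%nat -> forall a, 0 <= a <= T ->
    inhabited (Riemann_integrable (demand i) a T)) 0 T); [lra| |].
  - intros i Hi a Ha. replace a with 0 by lra. constructor. apply RiemannInt_P7.
  - intros s Hs0 HsT IH s' Hss' Hs'N Hs'T i Hi a Ha.
    assert (Hc : forall r, s < r < s' -> demand i r = demand i s)
      by (intros; apply demand_const_before_event; auto; lra).
    destruct (Rle_dec a s).
    + destruct (IH i Hi a ltac:(lra)) as [pr1]. constructor.
      apply (RiemannInt_P24 pr1), (Riemann_integrable_const_inside _ _ _ (demand i s)); [lra|].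
      intros; apply Hc; lra.
    + constructor. apply (Riemann_integrable_const_inside _ _ _ (demand i s)); [lra|].
      intros; apply Hc; lra.
Qed.

Lemma price_update i k : (i < n)%nat ->
  p (u i (S k)) i = p (u i k) i *
    (1 + price_rate lam (/ (u i (S k) - u i k) * integral (demand i) (u i k) (u i (S k))) (w i)).
Proof. apply Hupdate. Qed.

Lemma demand_integral_nonneg i a b : (i < n)%nat -> 0 <= a <= b ->
  (forall r, a < r < b -> pos_vec n (p r)) -> 0 <= integral (demand i) a b.
Proof.
  intros Hi Hab Hpos. destruct (demand_integrable b ltac:(lra) i Hi a ltac:(lra)) as [pr].
  enough (0 * (b - a) <= integral (demand i) a b) by lra.
  apply (integral_bounds _ _ _ 0 (d * w i) pr); [lra|]. intros r Hr. split.
  - left. apply Hxpos; auto.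
  - apply Hdem; auto; lra.
Qed.

Lemma prices_pos T : 0 <= T -> forall r, 0 <= r <= T -> pos_vec n (p r).
Proof.
  intros HT. apply (event_ind (fun T => forall r, 0 <= r <= T -> pos_vec n (p r)) 0 T); [lra| |].
  - intros r Hr. replace r with 0 by lra. auto.
  - intros s Hs0 HsT IH s' Hss' Hs'N Hs'T r Hr.
    assert (Hseg : forall r, 0 <= r < next_event s -> pos_vec n (p r)).
    { intros r0 Hr0 j Hj. destruct (Rle_dec r0 s); [apply IH; auto; lra|].
      rewrite (price_const_before_event s r0 j) by (auto; lra). apply (IH s); auto; lra. }
    destruct (Rlt_dec r (next_event s)); [apply Hseg; lra|].
    replace r with (next_event s) by lra. intros i Hi.
    pose proof (next_event_bounds s ltac:(lra)).
    destruct (update_index_at_event s i ltac:(lra) Hi) as [[_ Hk]|[Heq Hk]].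
    { rewrite (price_same_index i s) by (auto; lra). apply (IH s); auto; lra. }
    set (k := update_index i s). pose proof (update_index_spec i s Hi ltac:(lra)) as Hks. fold k in Hks.
    pose proof (update_time_nonneg i k Hi). pose proof (Huinc i k Hi).
    rewrite Heq. unfold next_update. fold k. rewrite price_update by auto.
    assert (Hpk : 0 < p (u i k) i).
    { unfold k. rewrite <- tau_eq, <- price_at_update_index by (auto; lra). apply (IH s); auto; lra. }
    assert (Havg : 0 <= / (u i (S k) - u i k) * integral (demand i) (u i k) (u i (S k))).
    { apply Rmult_le_pos; [left; apply Rinv_0_lt_compat; lra|].
      apply demand_integral_nonneg; auto; [lra|]. intros r0 Hr0. apply Hseg.
      unfold next_update in Heq. fold k in Heq. lra. }
    pose proof (price_rate_bounds lam _ (w i) ltac:(lra) (Hw i Hi) Havg). nra.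
Qed.

Lemma demand_integral_bounds i a b : (i < n)%nat -> 0 <= a <= b ->
  0 <= integral (demand i) a b <= d * w i * (b - a).
Proof.
  intros Hi Hab. split.
  - apply demand_integral_nonneg; auto. intros r Hr. apply (prices_pos r); lra.
  - destruct (demand_integrable b ltac:(lra) i Hi a ltac:(lra)) as [pr].
    apply (integral_bounds _ _ _ 0 (d * w i) pr); [lra|]. intros r Hr. split.
    + left. apply Hxpos; auto. apply (prices_pos r); lra.
    + apply Hdem; auto; lra.
Qed.

Lemma integral_extend i s s' a : (i < n)%nat -> 0 <= a <= s -> s <= s' <= next_event s ->
  integral (demand i) a s' = integral (demand i) a s + demand i s * (s' - s).
Proof.
  intros Hi Ha Hs'.
  destruct (demand_integrable s ltac:(lra) i Hi a ltac:(lra)) as [pr1].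
  destruct (demand_integrable s' ltac:(lra) i Hi a ltac:(lra)) as [pr3].
  assert (Hc : forall r, s < r < s' -> demand i r = demand i s)
    by (intros; apply demand_const_before_event; auto; lra).
  pose proof (Riemann_integrable_const_inside _ s s' _ ltac:(lra) Hc) as pr2.
  rewrite (integral_RiemannInt _ _ _ pr1), (integral_RiemannInt _ _ _ pr3), <- (RiemannInt_P26 pr1 pr2 pr3).
  rewrite (RiemannInt_const_inside _ s s' (demand i s) pr2); auto; lra.
Qed.

Lemma xbar_mul_elapsed i s : (i < n)%nat -> 0 <= s ->
  (s - tau (u i) s) * xbar x u p i s = integral (demand i) (tau (u i) s) s.
Proof.
  intros Hi Hs. unfold xbar. destruct (Req_EM_T s (tau (u i) s)) as [<-|Hne].
  - rewrite integral_empty. ring.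
  - unfold demand. field. lra.
Qed.

(* The running average of demand at [s], continued up to [s'] before the next event. *)
Definition extended_average s s' j :=
  ((s - tau (u j) s) * xbar x u p j s + demand j s * (s' - s)) / ((s - tau (u j) s) + (s' - s)).

Lemma average_extend j s s' : (j < n)%nat -> 0 <= s -> s < s' <= next_event s ->
  / (s' - tau (u j) s) * integral (demand j) (tau (u j) s) s' = extended_average s s' j.
Proof.
  intros Hj Hs Hs'. pose proof (tau_bounds j s Hj Hs). unfold extended_average.
  rewrite (integral_extend j s s' (tau (u j) s)), <- xbar_mul_elapsed by (auto; lra).
  field. lra.
Qed.

Lemma xbar_before_update j s s' : (j < n)%nat -> 0 <= s -> s < s' <= next_event s -> s' < next_update j s ->
  tau (u j) s' = tau (u j) s /\ xbar x u p j s' = extended_average s s' j.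
Proof.
  intros Hj Hs Hs' Hlt. pose proof (tau_bounds j s Hj Hs). pose proof (update_index_spec j s Hj Hs).
  assert (Ht : tau (u j) s' = tau (u j) s).
  { rewrite !tau_eq by (auto; lra). f_equal. apply update_index_eq; auto. unfold next_update in Hlt. lra. }
  split; auto. unfold xbar. rewrite Ht.
  destruct (Req_EM_T s' (tau (u j) s)); [lra|]. apply average_extend; auto.
Qed.

Let c := alpha1 * lam.
Let elapsed s j := s - tau (u j) s.
Let extended_elapsed s s' j := elapsed s j + (s' - s).

Lemma phi_as_potential s : phi n x w lam alpha1 u p s =
  rsum n (fun j => good_term w c (fun j => xbar x u p j s) (elapsed s) false (p s j) (demand j s) j).
Proof. reflexivity. Qed.

(* The potential at time [s'] as it would be if no price had changed since [s]. *)
Let frozen_potential s s' :=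
  marked_potential n w x c (extended_average s s') (extended_elapsed s s') (p s) (fun _ => false).

Lemma phi_flow_bound s s' : 0 <= s -> s < s' <= next_event s ->
  (1 + c * (s' - s)) * frozen_potential s s' <= phi n x w lam alpha1 u p s.
Proof.
  intros Hs Hs'. unfold frozen_potential, marked_potential.
  rewrite phi_as_potential, <- rsum_scal. apply rsum_le. intros j Hj.
  pose proof (tau_bounds j s Hj Hs). pose proof (next_event_le s j Hs Hj).
  pose proof (term_flow_decay c (demand j s) (xbar x u p j s) (w j) (elapsed s j) (s' - s)
    ltac:(unfold c; lra) ltac:(unfold elapsed; lra) ltac:(lra) ltac:(unfold elapsed; lra)) as HA.
  assert (Hp : 0 <= p s j) by (left; apply (prices_pos s); auto; lra).
  unfold good_term, extended_average, extended_elapsed.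
  rewrite <- Rmult_assoc, (Rmult_comm _ (p s j)), Rmult_assoc.
  apply Rmult_le_compat_l; auto.
Qed.

Lemma phi_between_events s s' : 0 <= s -> s < s' < next_event s ->
  phi n x w lam alpha1 u p s' = frozen_potential s s'.
Proof.
  intros Hs Hs'. rewrite phi_as_potential. apply rsum_ext. intros j Hj.
  pose proof (next_event_le s j Hs Hj).
  destruct (xbar_before_update j s s' Hj Hs ltac:(lra) ltac:(lra)) as [Ht Hx].
  unfold good_term, extended_elapsed, elapsed. rewrite Hx, Ht.
  rewrite (price_const_before_event s s' j), (demand_const_before_event s s' j) by (auto; lra).
  f_equal. f_equal. f_equal. ring.
Qed.

Definition updated_at_event s j : bool :=
  if Req_EM_T (next_event s) (next_update j s) then true else false.

Lemma phi_at_event_eq s : 0 <= s ->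
  phi n x w lam alpha1 u p (next_event s) =
    marked_potential n w x c (extended_average s (next_event s)) (extended_elapsed s (next_event s))
      (p (next_event s)) (updated_at_event s).
Proof.
  intros Hs. rewrite phi_as_potential. apply rsum_ext. intros j Hj.
  pose proof (next_event_bounds s Hs). pose proof (next_event_le s j Hs Hj) as Hle.
  unfold updated_at_event. destruct (Req_EM_T (next_event s) (next_update j s)) as [Heq|Hne].
  - destruct (update_index_at_event s j Hs Hj) as [[Hlt _]|[_ Hk]]; [lra|].
    assert (Ht : tau (u j) (next_event s) = next_event s)
      by (rewrite tau_eq, Hk by (auto; lra); symmetry; exact Heq).
    unfold good_term, xbar, elapsed. rewrite Ht.
    destruct (Req_EM_T (next_event s) (next_event s)); [|congruence].
    rewrite span3_diag, Rminus_diag. f_equal. ring.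
  - assert (Hlt : next_event s < next_update j s) by (destruct Hle; [auto | contradiction]).
    destruct (xbar_before_update j s (next_event s) Hj Hs ltac:(lra) Hlt) as [Ht Hx].
    unfold good_term, extended_elapsed, elapsed. rewrite Hx, Ht. f_equal. f_equal. f_equal. ring.
Qed.

Lemma price_at_event s j : 0 <= s -> (j < n)%nat ->
  p (next_event s) j = if updated_at_event s j
    then p s j * (1 + price_rate lam (extended_average s (next_event s) j) (w j)) else p s j.
Proof.
  intros Hs Hj. pose proof (next_event_bounds s Hs). unfold updated_at_event.
  destruct (Req_EM_T (next_event s) (next_update j s)) as [Heq|Hne];
    destruct (update_index_at_event s j Hs Hj) as [[Hlt Hk]|[Heq' Hk]]; try lra; try contradiction.
  - pose proof (tau_bounds j s Hj Hs).
    rewrite Heq at 1. unfold next_update. rewrite price_update by auto.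
    rewrite <- tau_eq, <- (price_at_update_index j s) by auto. f_equal. f_equal. f_equal.
    change (u j (S (update_index j s))) with (next_update j s). rewrite <- Heq.
    apply average_extend; auto; lra.
  - apply price_same_index; auto; lra.
Qed.

Lemma extended_average_bounds s s' j : 0 <= s -> s < s' <= next_event s -> (j < n)%nat ->
  0 <= extended_average s s' j <= d * w j.
Proof.
  intros Hs Hs' Hj. pose proof (tau_bounds j s Hj Hs). pose proof (next_event_le s j Hs Hj).
  rewrite <- average_extend by (auto; lra).
  pose proof (demand_integral_bounds j (tau (u j) s) s' Hj ltac:(lra)).
  assert (0 < s' - tau (u j) s) by lra. split.
  - apply Rmult_le_pos; [left; apply Rinv_0_lt_compat|]; lra.
  - apply (Rmult_le_reg_l (s' - tau (u j) s)); auto. rewrite <- Rmult_assoc, Rinv_r by lra. lra.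
Qed.

Lemma phi_at_event s : 0 <= s ->
  phi n x w lam alpha1 u p (next_event s) <= frozen_potential s (next_event s).
Proof.
  intros Hs. pose proof (next_event_bounds s Hs). rewrite phi_at_event_eq by auto.
  apply (potential_simultaneous_updates n w x M E d lam c Hw Hxpos Hxdep Hspend Hwgs HE Helast
    Hd Hlam HlamE Hc0 Hc_lam Hc_d Hcond).
  - intros j Hj. apply (prices_pos s); auto; lra.
  - intros j Hj HU. rewrite price_at_event, HU by auto. reflexivity.
  - intros j Hj HU. rewrite price_at_event, HU by auto. reflexivity.
  - intros j Hj. apply extended_average_bounds; auto; lra.
  - intros j Hj. pose proof (tau_bounds j s Hj Hs). pose proof (next_event_le s j Hs Hj).
    unfold extended_elapsed, elapsed. lra.
  - intros j Hj. apply Hdem; auto.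
Qed.

Lemma phi_event_step s s' : 0 <= s -> s < s' <= next_event s ->
  (1 + c * (s' - s)) * phi n x w lam alpha1 u p s' <= phi n x w lam alpha1 u p s.
Proof.
  intros Hs Hs'. pose proof (phi_flow_bound s s' Hs Hs').
  assert (0 <= c * (s' - s)) by (unfold c; apply Rmult_le_pos; lra).
  enough (phi n x w lam alpha1 u p s' <= frozen_potential s s') by nra.
  destruct (Rlt_dec s' (next_event s)).
  - rewrite (phi_between_events s s') by (auto; lra). lra.
  - replace s' with (next_event s) by lra. apply phi_at_event; auto.
Qed.

Lemma phi_nonneg s : 0 <= s -> 0 <= phi n x w lam alpha1 u p s.
Proof.
  intros Hs. rewrite phi_as_potential. apply rsum_nonneg. intros j Hj. unfold good_term, elapsed.
  apply Rmult_le_pos; [left; apply (prices_pos s); auto; lra|].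
  pose proof (span3_ge_dist32 (demand j s) (xbar x u p j s) (w j)).
  pose proof (tau_bounds j s Hj Hs). pose proof (next_update_bounds j s Hj Hs).
  pose proof (Rabs_pos (w j - xbar x u p j s)).
  assert (c * (s - tau (u j) s) <= 1) by (unfold c; nra).
  nra.
Qed.

Lemma phi_day_decay t : 0 <= t ->
  phi n x w lam alpha1 u p (t + 1) <= (1 - c / 2) * phi n x w lam alpha1 u p t.
Proof.
  intros Ht.
  assert (HQ : (1 + c * ((t + 1) - t)) * phi n x w lam alpha1 u p (t + 1) <= phi n x w lam alpha1 u p t).
  { apply (event_ind (fun T => (1 + c * (T - t)) * phi n x w lam alpha1 u p T <= phi n x w lam alpha1 u p t)
      t (t + 1)); [lra | replace (t - t) with 0 by ring; lra |].
    intros s Hts Hst IH s' Hss' Hs'N Hs'T.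
    pose proof (phi_event_step s s' ltac:(lra) ltac:(lra)).
    pose proof (phi_nonneg s' ltac:(lra)).
    assert (0 <= c * (s - t)) by (unfold c; apply Rmult_le_pos; lra).
    assert (0 <= c * (s' - s)) by (unfold c; apply Rmult_le_pos; lra).
    assert (1 + c * (s' - t) <= (1 + c * (s' - s)) * (1 + c * (s - t))) by nra.
    assert ((1 + c * (s - t)) * ((1 + c * (s' - s)) * phi n x w lam alpha1 u p s')
      <= (1 + c * (s - t)) * phi n x w lam alpha1 u p s) by (apply Rmult_le_compat_l; lra).
    nra. }
  replace ((t + 1) - t) with 1 in HQ by ring.
  pose proof (phi_nonneg (t + 1) ltac:(lra)).
  assert (1 <= (1 - c / 2) * (1 + c)) by (unfold c in *; nra).
  assert ((1 - c / 2) * ((1 + c * 1) * phi n x w lam alpha1 u p (t + 1))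
    <= (1 - c / 2) * phi n x w lam alpha1 u p t) by (apply Rmult_le_compat_l; [unfold c; lra | lra]).
  nra.
Qed.
End Trajectory.

(** * Geometric decay *)

Lemma geometric_decay_iter (f : R -> R) c : 0 <= 1 - c ->
  (forall t, 0 <= t -> f (t + 1) <= (1 - c) * f t) ->
  forall t0 k, 0 <= t0 -> f (t0 + INR k) <= (1 - c) ^ k * f t0.
Proof.
  intros Hc H t0 k Ht0. induction k as [|k IH].
  - simpl. rewrite Rplus_0_r. lra.
  - rewrite S_INR, <- Rplus_assoc. pose proof (pos_INR k).
    eapply Rle_trans; [apply H; lra|]. simpl. rewrite Rmult_assoc.
    apply Rmult_le_compat_l; lra.
Qed.

Lemma pow_one_minus_le_exp c k : 0 <= 1 - c -> (1 - c) ^ k <= exp (- c * INR k).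
Proof.
  intro Hc. induction k as [|k IH].
  - simpl. rewrite Rmult_0_r, exp_0. lra.
  - rewrite S_INR, Rmult_plus_distr_l, Rmult_1_r, exp_plus. simpl. rewrite Rmult_comm.
    pose proof (exp_ineq1_le (- c)).
    apply Rmult_le_compat; try lra. apply pow_le; lra.
Qed.

Lemma geometric_decay_time (f : R -> R) c : 0 < c -> 0 <= 1 - c ->
  (forall t, 0 <= t -> f (t + 1) <= (1 - c) * f t) ->
  forall t0 target, 0 <= t0 -> 0 < target -> 0 < f t0 ->
  forall k : nat, / c * ln (f t0 / target) <= INR k -> f (t0 + INR k) <= target.
Proof.
  intros Hc0 Hc1 H t0 target Ht0 Htg Hf k Hk.
  eapply Rle_trans; [apply (geometric_decay_iter f c Hc1 H t0 k Ht0)|].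
  assert (Hk2 : ln (f t0 / target) <= c * INR k).
  { apply (Rmult_le_compat_l c) in Hk; [|lra]. rewrite <- Rmult_assoc, Rinv_r in Hk by lra. lra. }
  assert (He : exp (- c * INR k) <= target / f t0).
  { replace (target / f t0) with (exp (- ln (f t0 / target))).
    - destruct (Rle_lt_or_eq_dec _ _ Hk2) as [Hlt|Heq].
      + left. apply exp_increasing. lra.
      + rewrite Heq. right. f_equal. ring.
    - rewrite exp_Ropp, exp_ln by (apply Rdiv_lt_0_compat; lra). field. lra. }
  pose proof (pow_one_minus_le_exp c k Hc1).
  apply Rle_trans with (target / f t0 * f t0); [apply Rmult_le_compat_r; lra|].
  right. field. lra.
Qed.

Theorem mainTheorem10
  (n : nat) (w : nat -> R) (x : nat -> (nat -> R) -> R)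
  (M E d lam alpha1 : R)
  (u : nat -> nat -> R) (p : R -> nat -> R)
  (Hw : forall i, (i < n)%nat -> 0 < w i)
  (Hxpos : forall i p0, (i < n)%nat -> pos_vec n p0 -> 0 < x i p0)
  (Hxdep : forall i p0 q0, (i < n)%nat ->
       (forall k, (k < n)%nat -> p0 k = q0 k) -> x i p0 = x i q0)
  (HM : 0 < M)
  (Hspend : forall p0, pos_vec n p0 -> rsum n (fun i => p0 i * x i p0) = M)
  (Hwgs : forall p0 i j s, (i < n)%nat -> (j < n)%nat -> j <> i ->
       pos_vec n p0 -> p0 i <= s -> x j p0 <= x j (upd p0 i s))
  (HE : 1 <= E)
  (Helast : forall p0 i, (i < n)%nat -> pos_vec n p0 ->
       exists l, derivable_pt_lim (fun s => x i (upd p0 i s)) (p0 i) l /\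
         x i p0 / p0 i <= - l /\ - l <= E * (x i p0 / p0 i))
  (Hlam : 0 < lam) (Halpha : 0 < alpha1) (Hd : 2 <= d)
  (Hlam_E : lam * E < 1)
  (Hcond1 : alpha1 * (d - 1) <= 1)
  (Hcond2 : lam * alpha1 + lam * (1 + 2 * E * d / (1 - lam * E)) <= 1)
  (Hu0 : forall i, (i < n)%nat -> u i O = 0)
  (Huinc : forall i k, (i < n)%nat -> u i k < u i (S k))
  (Hugap : forall i k, (i < n)%nat -> u i (S k) <= u i k + 1)
  (Huunb : forall i T, (i < n)%nat -> exists k, T < u i k)
  (Hp0 : pos_vec n (p 0))
  (Hpconst : forall i k t, (i < n)%nat -> u i k <= t < u i (S k) ->
       p t i = p (u i k) i)
  (Hupdate : forall i k, (i < n)%nat ->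
       p (u i (S k)) i = p (u i k) i *
         (1 + lam * Rmin 1
            ((/ (u i (S k) - u i k) *
                integral (fun s => x i (p s)) (u i k) (u i (S k)) - w i) / w i)))
  (Hdem : forall i t, (i < n)%nat -> 0 <= t -> x i (p t) <= d * w i) :
  (forall t, 0 <= t ->
     phi n x w lam alpha1 u p (t + 1)
       <= (1 - lam * alpha1 / 2) * phi n x w lam alpha1 u p t) /\
  (forall t0 phiF, 0 <= t0 -> 0 < phiF -> 0 < phi n x w lam alpha1 u p t0 ->
     forall k : nat,
       2 / (lam * alpha1) * ln (phi n x w lam alpha1 u p t0 / phiF) <= INR k ->
       phi n x w lam alpha1 u p (t0 + INR k) <= phiF).
Proof.
  assert (Hlam1 : lam < 1) by nra.
  assert (Hgain : 4 <= 2 * E * d / (1 - lam * E)).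
  { apply (Rmult_le_reg_r (1 - lam * E)); [lra|].
    unfold Rdiv. rewrite Rmult_assoc, Rinv_l by lra. nra. }
  assert (Halpha1 : alpha1 <= 1) by nra.
  assert (Hdecay : forall t, 0 <= t ->
    phi n x w lam alpha1 u p (t + 1) <= (1 - lam * alpha1 / 2) * phi n x w lam alpha1 u p t).
  { intros t Ht. destruct n as [|n'] eqn:Hn0; [unfold phi; simpl; lra|].
    rewrite <- Hn0 in *. rewrite (Rmult_comm lam alpha1).
    apply (phi_day_decay n w x u p d lam) with (M := M) (E := E); auto; try lia; nra. }
  split; [exact Hdecay|].
  intros t0 phiF Ht0 HF Hphi k Hk.
  apply (geometric_decay_time (phi n x w lam alpha1 u p) (lam * alpha1 / 2)); auto; try nra.
  replace (/ (lam * alpha1 / 2)) with (2 / (lam * alpha1)) by (field; nra). exact Hk.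
Qed.
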